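(* Let $X$ be a dendric shift over $\mathcal{A}_3=\{1,2,3\}$, let $\sigma\in\mathrm{DP}(X)$ and let $Y$ be the image of $X$ under $\sigma$. If $\mathcal{C}^-(Y)=\emptyset$, then $\mathcal{C}^-(X)=\emptyset$ and $\sigma$ is left-invariant. Respectively, if $\mathcal{C}^+(Y)=\emptyset$, then $\mathcal{C}^+(X)=\emptyset$ and $\sigma$ is right-invariant.
   Context: A shift space over $\mathcal{A}$ is a closed shift-invariant $X\subseteq\mathcal{A}^{\mathbb{Z}}$ in which all letters occur, with factor set $\mathcal{L}(X)$. For $w\in\mathcal{L}(X)$, $\mathcal{E}_X(w)$ is the bipartite graph with left vertices $a^-$ ($aw\in\mathcal{L}(X)$), right vertices $b^+$ ($wb\in\mathcal{L}(X)$), edges $\{a^-,b^+\}$ ($awb\in\mathcal{L}(X)$); $w$ is bispecial if it has at least two left and two right vertices, dendric if $\mathcal{E}_X(w)$ is a tree; $X$ is dendric if all factors are. $\mathcal{C}^-_X(w)$ (resp. $\mathcal{C}^+_X(w)$): letters $a$ such that removing $a^-$ (resp. $a^+$) and the resulting isolated vertices from $\mathcal{E}_X(w)$ leaves a disconnected graph; $\mathcal{C}^\pm(X)=\bigcup_{w\in\mathcal{L}(X)}\mathcal{C}^\pm_X(w)$. $\mathcal{S}_3=\{\alpha,\beta,\gamma,\eta\}\cup\{\delta^{(k)},\zeta^{(k)}:k\ge1\}$ with $\alpha:1\mapsto1,2\mapsto12,3\mapsto13$; $\beta:1\mapsto1,2\mapsto12,3\mapsto132$; $\gamma:1\mapsto1,2\mapsto12,3\mapsto123$;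 $\delta^{(k)}:1\mapsto1,2\mapsto123^k,3\mapsto123^{k+1}$; $\zeta^{(k)}:1\mapsto13^k,2\mapsto12,3\mapsto13^{k+1}$; $\eta:1\mapsto13,2\mapsto12,3\mapsto123$. $\sigma$ is left-invariant (right-invariant) if all longest common suffixes (prefixes) of $\sigma(a_1),\sigma(a_2)$, $a_1\ne a_2$, coincide. Image of $X$: $Y=\{S^k\sigma(x):x\in X,0\le k<|\sigma(x_0)|\}$. For non-empty $u\in\mathcal{L}(Y)$ containing $1$ there is a unique triple $(s,v,p)$, $v\in\mathcal{L}(X)$, $u=s\sigma(v)p$, with $s$ a proper suffix of $\sigma(a)$ and $p$ a non-empty prefix of $\sigma(b)$ for some $a,b$ with $avb\in\mathcal{L}(X)$; $u$ is an extended image of $v$. $\mathrm{DP}(X)$: set of $\sigma\in\mathcal{S}_3$ such that every bispecial extended image (in $Y$) of every $v\in\mathcal{L}(X)$ is dendric. *)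

From mathcomp Require Import all_boot all_order all_algebra.
Set Implicit Arguments. Unset Strict Implicit. Unset Printing Implicit Defensive.
Import Order.TTheory GRing.Theory Num.Theory.

(* The alphabet A_3 = {1,2,3}: letter i+1 is represented by the ordinal i. *)
Notation letter := 'I_3.
Definition l1 : letter := @Ordinal 3 0 erefl.
Definition l2 : letter := @Ordinal 3 1 erefl.
Definition l3 : letter := @Ordinal 3 2 erefl.

Definition config := int -> letter.
Definition subshift := config -> Prop.

Definition factor_at (x : config) (i : int) (n : nat) : seq letter :=
  [seq x (i + (k%:Z))%R | k <- iota 0 n].

Definition lang (X : subshift) (w : seq letter) : Prop :=
  exists x i, X x /\ w = factor_at x i (size w).

(* closedness in the product (discrete) topology: a point all of whose
   central windows are matched by points of X lies in X *)
Definition closed_sub (X : subshift) : Prop :=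
  forall x : config,
    (forall n : nat, exists y, X y /\
       forall i : int, (- (n%:Z) <= i <= n%:Z)%R -> y i = x i) -> X x.

Definition shift (x : config) : config := fun i => x (i + 1)%R.

Definition shift_space (X : subshift) : Prop :=
  [/\ closed_sub X,
      (forall x, X x <-> X (shift x)) &
      (forall a : letter, exists x, X x /\ exists i, x i = a)].

Fixpoint walk (V : Type) (e : V -> V -> Prop) (x : V) (p : seq V) : Prop :=
  match p with [::] => True | y :: p' => e x y /\ walk e y p' end.

Definition connected_in (V : Type) (P : V -> Prop) (e : V -> V -> Prop) :=
  forall u v, P u -> P v -> exists p, walk e u p /\ last u p = v.

Definition acyclic (V : eqType) (e : V -> V -> Prop) :=
  forall (x : V) (c' : seq V),
    uniq (x :: c') -> 3 <= size (x :: c') -> ~ walk e x (rcons c' x).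

Definition is_tree (V : eqType) (P : V -> Prop) (e : V -> V -> Prop) :=
  connected_in P e /\ acyclic e.

(* vertices: inl a = a^-, inr b = b^+ *)
Definition vertex := (letter + letter)%type.

Definition ext_vert (X : subshift) (w : seq letter) (v : vertex) : Prop :=
  match v with
  | inl a => lang X (a :: w)
  | inr b => lang X (rcons w b)
  end.

Definition ext_edge (X : subshift) (w : seq letter) (u v : vertex) : Prop :=
  match u, v with
  | inl a, inr b => lang X (a :: rcons w b)
  | inr b, inl a => lang X (a :: rcons w b)
  | _, _ => False
  end.

Definition dendric_word (X : subshift) (w : seq letter) : Prop :=
  is_tree (ext_vert X w) (ext_edge X w).

Definition dendric_shift (X : subshift) : Prop :=
  forall w, lang X w -> dendric_word X w.

Definition bispecial (X : subshift) (w : seq letter) : Prop :=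
  exists a a' b b' : letter,
    [/\ a != a', b != b',
        lang X (a :: w) /\ lang X (a' :: w) &
        lang X (rcons w b) /\ lang X (rcons w b')].

(* graph obtained by removing vertex r and the resulting isolated vertices *)
Definition rm_edge (X : subshift) (w : seq letter) (r : vertex) (u v : vertex) :=
  ext_edge X w u v /\ u != r /\ v != r.
Definition rm_vert (X : subshift) (w : seq letter) (r : vertex) (v : vertex) :=
  v != r /\ exists u, rm_edge X w r v u.
Definition disconnected_rm (X : subshift) (w : seq letter) (r : vertex) :=
  exists u v, [/\ rm_vert X w r u, rm_vert X w r v &
                  ~ exists p, walk (rm_edge X w r) u p /\ last u p = v].

Definition Cminus_w (X : subshift) (w : seq letter) (a : letter) : Prop :=
  ext_vert X w (inl a) /\ disconnected_rm X w (inl a).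
Definition Cplus_w (X : subshift) (w : seq letter) (a : letter) : Prop :=
  ext_vert X w (inr a) /\ disconnected_rm X w (inr a).

Definition Cminus_empty (X : subshift) : Prop :=
  forall w a, lang X w -> ~ Cminus_w X w a.
Definition Cplus_empty (X : subshift) : Prop :=
  forall w a, lang X w -> ~ Cplus_w X w a.

Definition morph := letter -> seq letter.

Definition mk3 (u1 u2 u3 : seq letter) : morph :=
  fun a => if a == l1 then u1 else if a == l2 then u2 else u3.

Definition s_alpha : morph := mk3 [:: l1] [:: l1; l2] [:: l1; l3].
Definition s_beta  : morph := mk3 [:: l1] [:: l1; l2] [:: l1; l3; l2].
Definition s_gamma : morph := mk3 [:: l1] [:: l1; l2] [:: l1; l2; l3].
Definition s_delta (k : nat) : morph :=
  mk3 [:: l1] ([:: l1; l2] ++ nseq k l3) ([:: l1; l2] ++ nseq k.+1 l3).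
Definition s_zeta (k : nat) : morph :=
  mk3 (l1 :: nseq k l3) [:: l1; l2] (l1 :: nseq k.+1 l3).
Definition s_eta   : morph := mk3 [:: l1; l3] [:: l1; l2] [:: l1; l2; l3].

Definition in_S3 (s : morph) : Prop :=
  s =1 s_alpha \/ s =1 s_beta \/ s =1 s_gamma \/ s =1 s_eta \/
  (exists k, 0 < k /\ s =1 s_delta k) \/ (exists k, 0 < k /\ s =1 s_zeta k).

Fixpoint lcp (u v : seq letter) : seq letter :=
  match u, v with
  | x :: u', y :: v' => if x == y then x :: lcp u' v' else [::]
  | _, _ => [::]
  end.
Definition lcs (u v : seq letter) : seq letter := rev (lcp (rev u) (rev v)).

Definition left_invariant (s : morph) : Prop :=
  forall a1 a2 b1 b2 : letter, a1 != a2 -> b1 != b2 ->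
    lcs (s a1) (s a2) = lcs (s b1) (s b2).
Definition right_invariant (s : morph) : Prop :=
  forall a1 a2 b1 b2 : letter, a1 != a2 -> b1 != b2 ->
    lcp (s a1) (s a2) = lcp (s b1) (s b2).

Definition subst_word (s : morph) (v : seq letter) : seq letter :=
  flatten (map s v).

(* sigma(x) for a bi-infinite x, with sigma(x_0) starting at position 0
   (meaningful for non-erasing sigma, as all morphisms of S_3 are) *)
Definition subst_conf (s : morph) (x : config) : config :=
  fun i => match i with
  | Posz n => nth l1 (flatten [seq s (x (Posz k)) | k <- iota 0 n.+1]) n
  | Negz m =>
      let w := flatten [seq s (x (Posz k - Posz m.+1)%R) | k <- iota 0 m.+1] in
      nth l1 w (size w - m.+1)
  end.

Definition image_shift (s : morph) (X : subshift) : subshift :=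
  fun y => exists x (k : nat),
    [/\ X x, k < size (s (x 0%R)) &
        forall i : int, y i = subst_conf s x (i + k%:Z)%R].

Definition ext_image (s : morph) (X : subshift) (u v : seq letter) : Prop :=
  [/\ lang (image_shift s X) u, u != [::], l1 \in u &
      exists (a b : letter) (sf p : seq letter),
        [/\ lang X (a :: rcons v b),
            suffix sf (s a) && (size sf < size (s a)),
            prefix p (s b) && (p != [::]) &
            u = sf ++ subst_word s v ++ p]].

Definition DP (X : subshift) (s : morph) : Prop :=
  in_S3 s /\
  forall v u, lang X v -> ext_image s X u v ->
    bispecial (image_shift s X) u -> dendric_word (image_shift s X) u.

From mathcomp Require Import all_boot all_order all_algebra.
From mathcomp Require Import zify.
From Stdlib Require Import FunctionalExtensionality Classical.
From Corelib Require Import Program.Basics.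
Set Implicit Arguments. Unset Strict Implicit. Unset Printing Implicit Defensive.

(* As there are only three letters, c lies in C^-_X(w) exactly when the two other
   left extensions of w have disjoint sets of right extensions; C^+ is the same
   notion for the transposed extension relation.
   For sigma = alpha, beta, gamma each image starts with its only occurrence of 1,
   so the factors of Y containing 1 parse uniquely into images.  The extension
   graph of one of the extended images sigma(w)1, sigma(w)12, 2sigma(w)1 of w is
   then the image of E_X(w) under maps reading off the last, second, third or
   penultimate letter of images, and these maps keep the two separated letters
   separated: every c in C^-_X(w) (resp. C^+_X(w)) survives in Y.  For beta and
   gamma the connectedness of the tree E_X(w) decides which extended image works.
   In all remaining cases the empty word of Y already has a cut letter, read off
   from the two-letter factors of Y, which all lie in some sigma(a)1; the
   invariance claims are computations. *)

(** * Cut vertices of extension graphs *)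

Lemma letter_ind (P : letter -> Prop) : P l1 -> P l2 -> P l3 -> forall a, P a.
Proof.
move=> P1 P2 P3 [[|[|[|//]]] lt_a3].
- by have -> : Ordinal lt_a3 = l1 by apply: val_inj.
- by have -> : Ordinal lt_a3 = l2 by apply: val_inj.
- by have -> : Ordinal lt_a3 = l3 by apply: val_inj.
Qed.

Lemma neq_letter_cases (c a1 a2 a : letter) :
  a1 != c -> a2 != c -> a1 != a2 -> a != c -> a = a1 \/ a = a2.
Proof.
move: c a1 a2 a; do 4! apply: letter_ind => //;
by [left | right].
Qed.

Section Walks.
Variables (V : Type) (e : V -> V -> Prop).

Definition reach (u v : V) := exists p, walk e u p /\ last u p = v.

Lemma walk_cat x p q : walk e x (p ++ q) <-> walk e x p /\ walk e (last x p) q.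
Proof. by elim: p x => [|y p IHp] x /=; [tauto | rewrite IHp; tauto]. Qed.

Lemma reach_refl u : reach u u.
Proof. by exists [::]. Qed.

Lemma reach_step u v : e u v -> reach u v.
Proof. by exists [:: v]. Qed.

Lemma reach_trans u v t : reach u v -> reach v t -> reach u t.
Proof.
move=> [p [walk_p <-]] [q [walk_q <-]].
by exists (p ++ q); rewrite walk_cat last_cat.
Qed.

Lemma walk_closed (S : V -> Prop) x p :
  (forall y z, S y -> e y z -> S z) -> S x -> walk e x p -> S (last x p).
Proof.
move=> closedS; elim: p x => //= y p IHp x Sx [exy walk_p].
exact: IHp (closedS _ _ Sx exy) walk_p.
Qed.

End Walks.

Lemma reach_map V W (e : V -> V -> Prop) (e' : W -> W -> Prop) (f : V -> W) u v :
  (forall y z, e y z -> e' (f y) (f z)) -> reach e u v -> reach e' (f u) (f v).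
Proof.
move=> fe [p [walk_p <-]]; exists (map f p); rewrite last_map; split=> //.
by elim: p u walk_p => //= y p IHp u [/fe exy /IHp].
Qed.

Definition side_edge (R : letter -> letter -> Prop) (u v : vertex) : Prop :=
  match u, v with
  | inl a, inr b | inr b, inl a => R a b
  | _, _ => False
  end.

Definition rm_vertex (e : vertex -> vertex -> Prop) (r u v : vertex) :=
  e u v /\ u != r /\ v != r.

Definition cut_vertex (e : vertex -> vertex -> Prop) (r : vertex) :=
  exists u v, [/\ u != r /\ (exists t, rm_vertex e r u t),
                  v != r /\ (exists t, rm_vertex e r v t) &
                  ~ reach (rm_vertex e r) u v].

Definition left_cut (R : letter -> letter -> Prop) (c : letter) :=
  exists a1 a2, [/\ a1 != c, a2 != c, a1 != a2,
    (exists b, R a1 b) /\ (exists b, R a2 b) &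
    forall b, R a1 b -> R a2 b -> False].

Section LeftCut.
Variable R : letter -> letter -> Prop.
Notation G := (side_edge R).

Lemma left_component_avoid (e : vertex -> vertex -> Prop) c a1 a2 p :
  a1 != c -> a2 != c -> a1 != a2 -> (forall b, R a1 b -> R a2 b -> False) ->
  (forall u v, e u v -> G u v) -> (forall b, R a1 b -> ~ e (inr b) (inl c)) ->
  walk e (inl a1) p -> last (inl a1) p != inl a2.
Proof.
move=> a1c a2c a12 disj eG no_c walk_p.
pose S v := v = inl a1 \/ exists2 b, v = inr b & R a1 b.
have closedS y z : S y -> e y z -> S z.
  case=> [-> | [b -> a1b]] eyz; move: (eG _ _ eyz).
    by case: z eyz => //= b' _ Ra1b'; right; exists b'.
  case: z eyz => //= a eyz Rab.
  have [ac | ac] := eqVneq a c; first by subst a; case: (no_c b).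
  have [-> | a2a] := neq_letter_cases a1c a2c a12 ac; first by left.
  by subst a; case: (disj b).
by case: (walk_closed closedS (or_introl erefl) walk_p) => [-> | [b -> _]].
Qed.

Lemma rm_vertex_inl_reach c u : u != inl c -> (exists t, rm_vertex G (inl c) u t) ->
  exists a, [/\ a != c, (exists b, R a b), reach (rm_vertex G (inl c)) u (inl a)
              & reach (rm_vertex G (inl c)) (inl a) u].
Proof.
move=> uc [t [Gut [_ tc]]].
case: u uc Gut => [a|b] uc; case: t tc => [a'|b'] tc //= Rab.
- by exists a; split; [| exists b' | exact: reach_refl | exact: reach_refl].
by exists a'; split; [| exists b | apply: reach_step | apply: reach_step].
Qed.

Lemma cut_vertex_inlP c : cut_vertex G (inl c) <-> left_cut R c.
Proof.
split.
  move=> [u [v [[uc u_rm] [vc v_rm] not_uv]]].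
  have [a1 [a1c a1b u_a1 a1_u]] := rm_vertex_inl_reach uc u_rm.
  have [a2 [a2c a2b v_a2 a2_v]] := rm_vertex_inl_reach vc v_rm.
  have a1_a2_unreachable : ~ reach (rm_vertex G (inl c)) (inl a1) (inl a2).
    by move=> a12; apply: not_uv; apply: reach_trans u_a1 (reach_trans a12 a2_v).
  exists a1, a2; split=> //.
    by apply/eqP=> a12; subst a2; apply: a1_a2_unreachable; apply: reach_refl.
  move=> b Ra1b Ra2b; apply: a1_a2_unreachable.
  by apply: (@reach_trans _ _ _ (inr b)); apply: reach_step.
move=> [a1 [a2 [a1c a2c a12 [[b1 Ra1b1] [b2 Ra2b2]] disj]]].
exists (inl a1), (inl a2); split;
  [by split=> //; exists (inr b1) | by split=> //; exists (inr b2) |].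
move=> [p [walk_p last_p]].
have no_c b : R a1 b -> ~ rm_vertex G (inl c) (inr b) (inl c) by move=> _ [_ [_ /eqP]].
have rm_G u v : rm_vertex G (inl c) u v -> G u v by case.
by move: (left_component_avoid a1c a2c a12 disj rm_G no_c walk_p); rewrite last_p eqxx.
Qed.

Lemma reach_left_cut_neighbour c a1 a2 :
  reach G (inl a1) (inl a2) -> a1 != c -> a2 != c -> a1 != a2 ->
  (forall b, R a1 b -> R a2 b -> False) -> exists b, R c b /\ R a1 b.
Proof.
move=> [p [walk_p last_p]] a1c a2c a12 disj; apply: NNPP => no_c.
have no_c' b : R a1 b -> ~ G (inr b) (inl c) by move=> Ra1b Rcb; apply: no_c; exists b.
by move: (left_component_avoid a1c a2c a12 disj (fun u v (Guv : G u v) => Guv) no_c' walk_p);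
  rewrite last_p eqxx.
Qed.

Lemma reach_left_cut_neighbour_neq c a1 a2 z :
  reach G (inl a1) (inl a2) -> reach G (inl a2) (inl a1) ->
  a1 != c -> a2 != c -> a1 != a2 -> (forall b, R a1 b -> R a2 b -> False) ->
  exists2 b, R c b & b != z.
Proof.
move=> r12 r21 a1c a2c a12 disj.
have [b [Rcb R1b]] := reach_left_cut_neighbour r12 a1c a2c a12 disj.
have a21 : a2 != a1 by rewrite eq_sym.
have [b' [Rcb' R2b']] :=
  reach_left_cut_neighbour r21 a2c a1c a21 (fun x R2x R1x => disj x R1x R2x).
have [bz | bz] := eqVneq b z; last by exists b.
by exists b' => //; apply/eqP => b'z; subst b b'; apply: disj R1b R2b'.
Qed.

End LeftCut.

(* Exchanging the two sides turns the right vertices of [side_edge R] into the left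
   vertices of [side_edge (flip R)]. *)
Definition swap (v : vertex) : vertex :=
  match v with inl a => inr a | inr b => inl b end.

Lemma swapK : involutive swap.
Proof. by case. Qed.

Lemma side_edge_swap R u v : side_edge (flip R) (swap u) (swap v) = side_edge R u v.
Proof. by case: u; case: v. Qed.

Lemma reach_swap R u v :
  reach (side_edge R) u v -> reach (side_edge (flip R)) (swap u) (swap v).
Proof. by apply: reach_map => y z; rewrite side_edge_swap. Qed.

Lemma rm_vertex_swap R r u v :
  rm_vertex (side_edge (flip R)) (swap r) (swap u) (swap v) <-> rm_vertex (side_edge R) r u v.
Proof. by rewrite /rm_vertex side_edge_swap !(inj_eq (can_inj swapK)). Qed.

Lemma cut_vertex_swap R r :
  cut_vertex (side_edge R) r -> cut_vertex (side_edge (flip R)) (swap r).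
Proof.
move=> [u [v [[ur [t ut]] [vr [t' vt]] not_uv]]].
exists (swap u), (swap v); split.
- by rewrite (inj_eq (can_inj swapK)); split=> //; exists (swap t); apply/rm_vertex_swap.
- by rewrite (inj_eq (can_inj swapK)); split=> //; exists (swap t'); apply/rm_vertex_swap.
move=> reach_flip; apply: not_uv; rewrite -[u]swapK -[v]swapK.
apply: reach_map reach_flip => y z.
by rewrite -{1}[y]swapK -{1}[z]swapK => /rm_vertex_swap.
Qed.

Lemma cut_vertex_inrP R c : cut_vertex (side_edge R) (inr c) <-> left_cut (flip R) c.
Proof.
rewrite -cut_vertex_inlP; split; first exact: (@cut_vertex_swap _ (inr c)).
exact: (@cut_vertex_swap _ (inl c)).
Qed.

Definition ext_rel (X : subshift) (w : seq letter) (a b : letter) :=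
  lang X (a :: rcons w b).

Lemma disconnected_rmE X w r :
  disconnected_rm X w r <-> cut_vertex (side_edge (ext_rel X w)) r.
Proof. by []. Qed.

Lemma CminusP X w c : Cminus_w X w c <-> lang X (c :: w) /\ left_cut (ext_rel X w) c.
Proof. by rewrite /Cminus_w disconnected_rmE cut_vertex_inlP. Qed.

Lemma CplusP X w c : Cplus_w X w c <-> lang X (rcons w c) /\ left_cut (flip (ext_rel X w)) c.
Proof. by rewrite /Cplus_w disconnected_rmE cut_vertex_inrP. Qed.

Lemma left_cut_image (R S : letter -> letter -> Prop) (P : letter -> Prop)
    (f : letter -> letter) c a1 a2 :
  (forall a b', S a b' <-> exists2 b, R a b /\ P b & f b = b') ->
  a1 != c -> a2 != c -> a1 != a2 ->
  (exists b, R a1 b /\ P b) -> (exists b, R a2 b /\ P b) ->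
  (forall b1 b2, R a1 b1 -> R a2 b2 -> P b1 -> P b2 -> f b1 != f b2) ->
  left_cut S c.
Proof.
move=> SE a1c a2c a12 [b1 R1 ] [b2 R2] sep; exists a1, a2; split=> //.
  by split; [exists (f b1) | exists (f b2)]; apply/SE; [exists b1 | exists b2].
move=> b' /SE [x1 [R1x P1x] <-] /SE [x2 [R2x P2x] /esym/eqP].
by apply/negP; apply: sep.
Qed.

(* If [a1] and [a2] both have neighbours other than [z], then so does [c] by
   connectivity, and [S] sees them; otherwise one of them only sees [z], which [f']
   does not identify with anything else. *)
Lemma left_cut_image_split (R S S' : letter -> letter -> Prop) (f f' : letter -> letter) z c :
  (forall a1 a2, (exists b, R a1 b) -> (exists b, R a2 b) ->
     reach (side_edge R) (inl a1) (inl a2)) ->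
  (forall a b', S a b' <-> exists2 b, R a b /\ b != z & f b = b') ->
  (forall a b', S' a b' <-> exists2 b, R a b /\ True & f' b = b') ->
  {in [pred b | b != z] &, injective f} -> (forall b, f' b = f' z -> b = z) ->
  (exists b, R c b) -> left_cut R c ->
  (exists b', S c b') /\ left_cut S c \/ (exists b', S' c b') /\ left_cut S' c.
Proof.
move=> conn SE S'E f_inj f'_z [bc Rc] [a1 [a2 [a1c a2c a12 [ne1 ne2] disj]]].
case: (classic ((exists b, R a1 b /\ b != z) /\ (exists b, R a2 b /\ b != z))).
  move=> [nz1 nz2]; left.
  have [b Rcb bz] :=
    reach_left_cut_neighbour_neq z (conn _ _ ne1 ne2) (conn _ _ ne2 ne1) a1c a2c a12 disj.
  split; first by exists (f b); apply/SE; exists b.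
  apply: (left_cut_image SE a1c a2c a12 nz1 nz2) => b1 b2 R1 R2 P1 P2.
  by apply/eqP => /(f_inj _ _ P1 P2) eq_b; subst b2; apply: disj R1 R2.
move=> /not_and_or only_z; right.
split; first by exists (f' bc); apply/S'E; exists bc.
have {}only_z : (forall b, R a1 b -> b = z) \/ (forall b, R a2 b -> b = z).
  by case: only_z => /not_ex_all_not no_b; [left | right] => b Rb;
    apply/eqP; apply: contra_notT (no_b b) => bz.
apply: (left_cut_image S'E a1c a2c a12);
  [by case: ne1 => b; exists b | by case: ne2 => b; exists b |].
move=> b1 b2 R1 R2 _ _; apply/eqP => eq_f'.
case: only_z => [/(_ _ R1) b1z | /(_ _ R2) b2z]; subst.
  by have b2z := f'_z _ (esym eq_f'); subst; apply: disj R1 R2.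
by have b1z := f'_z _ eq_f'; subst; apply: disj R1 R2.
Qed.

(** * Factors of shift spaces *)

Lemma size_factor_at x i n : size (factor_at x i n) = n.
Proof. by rewrite size_map size_iota. Qed.

Lemma factor_at_cat x i m n :
  factor_at x i (m + n) = factor_at x i m ++ factor_at x (i + m%:Z)%R n.
Proof.
rewrite /factor_at iotaD map_cat add0n; congr (_ ++ _).
rewrite -[m in iota m]addn0 iotaDl -map_comp; apply: eq_map => t /=.
by rewrite PoszD GRing.addrA.
Qed.

Lemma cat_inj_size (T : eqType) (p q p' q' : seq T) :
  size p = size p' -> p ++ q = p' ++ q' -> p = p' /\ q = q'.
Proof. by move=> eq_size /eqP; rewrite eqseq_cat // => /andP [/eqP -> /eqP ->]. Qed.

Section Language.
Variable X : subshift.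

Lemma lang_infix p u r : lang X (p ++ u ++ r) -> lang X u.
Proof.
move=> [x [i [Xx puE]]]; exists x, (i + (size p)%:Z)%R; split=> //.
move: puE; rewrite !size_cat !factor_at_cat.
case/cat_inj_size; first by rewrite size_factor_at.
by move=> _ /cat_inj_size [] //; rewrite size_factor_at.
Qed.

Lemma lang_prefix p u : lang X (p ++ u) -> lang X p.
Proof. by move=> pu; apply: (@lang_infix [::] p u). Qed.

Lemma lang_suffix p u : lang X (p ++ u) -> lang X u.
Proof. by move=> pu; apply: (@lang_infix p u [::]); rewrite cats0. Qed.

Lemma lang_extend_right w : lang X w -> exists b, lang X (rcons w b).
Proof.
move=> [x [i [Xx wE]]]; exists (x (i + (size w)%:Z)%R), x, i; split=> //.
by rewrite size_rcons -[(size w).+1]addn1 factor_at_cat -wE /factor_at /= GRing.addr0 cats1.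
Qed.

Lemma lang_extend_left w : lang X w -> exists a, lang X (a :: w).
Proof.
move=> [x [i [Xx wE]]]; exists (x (i - 1)%R), x, (i - 1)%R; split=> //.
by rewrite /= -[(size w).+1]add1n factor_at_cat GRing.subrK -wE /factor_at /= GRing.addr0.
Qed.

Lemma ext_rel_lang_left w a b : ext_rel X w a b -> lang X (a :: w).
Proof. by rewrite /ext_rel -cats1 => /(@lang_prefix (a :: w)). Qed.

Lemma ext_rel_lang_right w a b : ext_rel X w a b -> lang X (rcons w b).
Proof. exact: (@lang_suffix [:: a]). Qed.

Lemma lang_letter a : shift_space X -> lang X [:: a].
Proof.
case=> _ _ /(_ a) [x [Xx [i xi]]]; exists x, i; split=> //.
by rewrite /factor_at /= GRing.addr0 xi.
Qed.

Definition translate (x : config) (i : int) : config := fun j => x (j + i)%R.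

Lemma translate_closed : (forall x, X x <-> X (shift x)) ->
  forall x i, X x -> X (translate x i).
Proof.
move=> shiftX x i Xx.
have translate_shift j : shift (translate x j) = translate x (j + 1)%R.
  by apply: functional_extensionality => t; rewrite /shift /translate; congr x; lia.
have translate0 : translate x 0 = x.
  by apply: functional_extensionality => t; rewrite /translate GRing.addr0.
have translate_pos (n : nat) : X (translate x n%:Z).
  elim: n => [|n IHn]; first by rewrite translate0.
  by move/shiftX: IHn; rewrite translate_shift -[n.+1]addn1 PoszD.
have translate_neg (n : nat) : X (translate x (- n%:Z))%R.
  elim: n => [|n IHn]; first by rewrite GRing.oppr0 translate0.
  by apply/shiftX; rewrite translate_shift; congr (X (translate x _)): IHn; lia.
by case: i => n; [exact: translate_pos | exact: translate_neg n.+1].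
Qed.

End Language.

Lemma not_Cminus_empty X w c :
  (exists b, ext_rel X w c b) -> left_cut (ext_rel X w) c -> ~ Cminus_empty X.
Proof.
move=> [b /ext_rel_lang_left Xcw] cut XC; apply: (XC w c).
  exact: (@lang_suffix _ [:: c]).
exact/CminusP.
Qed.

Lemma not_Cplus_empty X w c :
  (exists a, ext_rel X w a c) -> left_cut (flip (ext_rel X w)) c -> ~ Cplus_empty X.
Proof.
move=> [a /ext_rel_lang_right Xwc] cut XC; apply: (XC w c).
  by apply: (@lang_prefix _ _ [:: c]); rewrite cats1.
exact/CplusP.
Qed.

Lemma dendric_reach X w u v : dendric_word X w ->
  ext_vert X w u -> ext_vert X w v -> reach (side_edge (ext_rel X w)) u v.
Proof. by case=> conn _; apply: conn. Qed.

(** * Images of shift spaces *)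

Lemma subst_word_cat s v1 v2 : subst_word s (v1 ++ v2) = subst_word s v1 ++ subst_word s v2.
Proof. by rewrite /subst_word map_cat flatten_cat. Qed.

Lemma subst_word1 s a : subst_word s [:: a] = s a.
Proof. exact: cats0. Qed.

Lemma nth_cat_suffix (p q : seq letter) t : 0 < t <= size q ->
  nth l1 (p ++ q) (size (p ++ q) - t) = nth l1 q (size q - t).
Proof.
move=> t_q; rewrite nth_cat size_cat.
have -> : (size p + size q - t < size p) = false by lia.
by congr nth; lia.
Qed.

Section Image.
Variables (s : morph) (X : subshift).
Hypothesis s_nonerasing : forall a, 0 < size (s a).
Notation Y := (image_shift s X).
Notation img x i n := (subst_word s (factor_at x i n)).

Lemma size_subst_word v : size v <= size (subst_word s v).
Proof.
elim: v => //= a v IHv; rewrite /subst_word /= size_cat.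
by have := s_nonerasing a; rewrite /subst_word in IHv; lia.
Qed.

Lemma size_img x i n : n <= size (img x i n).
Proof. by rewrite -{1}(size_factor_at x i n) size_subst_word. Qed.

Lemma subst_conf_nonneg x N t : t < size (img x 0 N) ->
  subst_conf s x (Posz t) = nth l1 (img x 0 N) t.
Proof.
have img0 n : img x 0 n = flatten [seq s (x (Posz k)) | k <- iota 0 n].
  by rewrite /subst_word -map_comp; congr flatten; apply: eq_map => k /=; rewrite GRing.add0r.
rewrite /subst_conf -img0 => t_N; case: (leqP t.+1 N) => tN.
  rewrite -(subnKC tN) factor_at_cat subst_word_cat nth_cat ifT //.
  exact: leq_trans (size_img x 0 t.+1).
by rewrite -(subnKC (ltnW tN)) factor_at_cat subst_word_cat nth_cat t_N.
Qed.

Lemma subst_conf_neg x m t : t < size (img x (- Posz m)%R m) ->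
  subst_conf s x (Negz t) = nth l1 (img x (- Posz m)%R m) (size (img x (- Posz m)%R m) - t.+1).
Proof.
have imgN n : img x (- Posz n)%R n = flatten [seq s (x (Posz k - Posz n)%R) | k <- iota 0 n].
  by rewrite /subst_word -map_comp; congr flatten; apply: eq_map => k /=; rewrite GRing.addrC.
have img_suffix d n : exists p, img x (- Posz (d + n))%R (d + n) = p ++ img x (- Posz n)%R n.
  rewrite factor_at_cat subst_word_cat; eexists.
  by congr (_ ++ subst_word s (factor_at x _ n)); lia.
rewrite /subst_conf -imgN => t_m; case: (leqP t.+1 m) => tm.
  have [p imgE] := img_suffix (m - t.+1) t.+1; rewrite subnK // in imgE.
  rewrite imgE nth_cat_suffix //.
  by have := size_img x (- Posz t.+1)%R t.+1; lia.
have [p imgE] := img_suffix (t.+1 - m) m; rewrite subnK ?(ltnW tm) // in imgE.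
by rewrite imgE nth_cat_suffix //; lia.
Qed.

Lemma image_lang_factor u : lang Y u ->
  exists2 v, lang X v & exists p r, subst_word s v = p ++ u ++ r.
Proof.
move=> [y [i [[x [k [Xx _ yE]]] uE]]].
set n := size u in uE; set j := (i + k%:Z)%R; set m := absz j; set N := (m + n)%N.
(* [u] lies in the image of the window [x_(-m) ... x_(N-1)] of [x]. *)
exists (factor_at x (- Posz m)%R m ++ factor_at x 0 N).
  exists x, (- Posz m)%R; split=> //.
  by rewrite size_cat !size_factor_at factor_at_cat GRing.addNr.
rewrite subst_word_cat; set A := img x _ m; set B := img x 0 N.
have size_A : m <= size A := size_img x _ m.
have size_B : m + n <= size B := size_img x 0 N.
have jE : j = (i + k%:Z)%R by [].
have j_m : (- Posz m <= j <= Posz m)%R by rewrite /m; lia.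
set e := absz (j + Posz (size A))%R.
have eE : Posz e = (j + Posz (size A))%R by rewrite /e; lia.
suff -> : u = take n (drop e (A ++ B)).
  exists (take e (A ++ B)), (drop (e + n) (A ++ B)).
  by rewrite (addnC e n) -drop_drop !cat_take_drop.
have n_drop : n <= size (drop e (A ++ B)) by rewrite size_drop size_cat; lia.
apply: (@eq_from_nth _ l1) => [|t]; first by rewrite size_takel.
rewrite -/n => t_n.
rewrite nth_take // nth_drop uE /factor_at (nth_map 0%N) ?size_iota // nth_iota // add0n yE.
case jt: (i + t%:Z + k%:Z)%R => [q|q].
  have q_B : q < size B by lia.
  rewrite (subst_conf_nonneg q_B) nth_cat ifF; last by apply/negbTE; lia.
  by congr nth; lia.
move: jt; rewrite NegzE => jt.
have q_A : q < size A by lia.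
rewrite (subst_conf_neg q_A) -/A nth_cat ifT; last by lia.
by congr nth; lia.
Qed.

Hypothesis shiftX : forall x, X x <-> X (shift x).

Lemma lang_image_factor v p u r : lang X v -> subst_word s v = p ++ u ++ r -> lang Y u.
Proof.
move=> [x [i [Xx vE]]] svE.
have vE' : v = factor_at (translate x i) 0 (size v).
  by rewrite {1}vE; apply: eq_map => t; rewrite /translate GRing.add0r GRing.addrC.
exists (subst_conf s (translate x i)), (Posz (size p)); split.
  exists (translate x i), 0%N; split; first exact: translate_closed shiftX _ _ Xx.
    exact: s_nonerasing.
  by move=> j; rewrite GRing.addr0.
apply: (@eq_from_nth _ l1) => [|t t_u]; first by rewrite size_factor_at.
rewrite (nth_map 0%N) ?size_iota // nth_iota // add0n -PoszD.
rewrite (@subst_conf_nonneg _ (size v)) -vE' svE ?size_cat; last lia.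
by rewrite nth_cat ifF ?addKn ?nth_cat ?t_u //; lia.
Qed.

End Image.

(** * Morphisms marked by their first letter *)

(* In the image of a word under a morphism with marked images, the occurrences of
   [l1] are exactly the starting points of the images of its letters. *)
Definition marked (A : seq letter) := exists2 A', A = l1 :: A' & l1 \notin A'.

Lemma marked_nth A i : marked A -> 0 < i < size A -> nth l1 A i != l1.
Proof.
case=> A' -> l1_A' /andP [i_gt0 i_lt]; rewrite -(prednK i_gt0) /=.
by apply: contraNneq l1_A' => <-; rewrite mem_nth // -ltnS (prednK i_gt0).
Qed.

Lemma nth_cat_size_head (A C : seq letter) : nth l1 (A ++ C) (size A) = head l1 C.
Proof. by rewrite nth_cat ltnn subnn; case: C. Qed.

Lemma marked_cat_inj A B C D : marked A -> marked B ->
  head l1 C = l1 -> head l1 D = l1 -> A ++ C = B ++ D -> A = B.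
Proof.
wlog AB : A B C D / size A <= size B => [hwlog | mA mB hC hD eq_AB].
  move=> mA mB hC hD eq_AB; case: (leqP (size A) (size B)) => [|/ltnW] BA.
    exact: hwlog eq_AB.
  by apply/esym; apply: hwlog (esym eq_AB).
case: (ltngtP (size A) (size B)) AB => // [lt_AB _ | eq_size _]; last first.
  by case: (cat_inj_size eq_size eq_AB).
have A_gt0 : 0 < size A by case: mA => A' ->.
move/(congr1 (nth l1 ^~ (size A))): eq_AB; rewrite nth_cat_size_head hC nth_cat lt_AB => /esym.
by move/eqP; rewrite (negbTE (marked_nth mB _)) // A_gt0.
Qed.

(* Past the end of [A] the default [l1] is read, which is the first letter of any
   image that may follow [A]. *)
Lemma nth_cat_head_l1 (A z : seq letter) i : head l1 z = l1 -> i <= size A ->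
  nth l1 (A ++ z) i = nth l1 A i.
Proof.
move=> hz; rewrite leq_eqVlt => /orP [/eqP -> | lt_iA]; last by rewrite nth_cat lt_iA.
by rewrite nth_cat_size_head hz nth_default.
Qed.

Definition penultimate (A : seq letter) := nth l1 A (size A).-2.

Lemma penultimate_last A : 1 < size A ->
  exists p, A = p ++ [:: penultimate A; last l1 A].
Proof.
case/lastP: A => // A y; case/lastP: A => // A x _; exists A.
rewrite /penultimate !size_rcons /= nth_rcons size_rcons ltnSn nth_rcons ltnn eqxx.
by rewrite last_rcons -!cats1 -catA.
Qed.

Lemma head_subst_word s v : (forall a, exists A', s a = l1 :: A') ->
  head l1 (subst_word s v) = l1.
Proof. by case: v => // a v s_head; rewrite /subst_word /=; case: (s_head a) => A' ->. Qed.

Section MarkedMorphism.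
Variables (s : morph) (X : subshift).
Hypothesis s_marked : forall a, marked (s a).
Hypothesis s_inj : injective s.
Notation Y := (image_shift s X).
Notation sw := (subst_word s).

Lemma marked_nonerasing a : 0 < size (s a).
Proof. by case: (s_marked a) => A' ->. Qed.

Let s_head a : exists A', s a = l1 :: A'.
Proof. by case: (s_marked a) => A' ->; exists A'. Qed.

Let sw_head v : head l1 (sw v) = l1 := head_subst_word v s_head.

Lemma subst_word_split v q z : sw v = q ++ l1 :: z ->
  exists v1 v2, v = v1 ++ v2 /\ sw v1 = q.
Proof.
elim: v q => [|a v IHv] q; first by case: q.
have [-> _ | q_nil] := eqVneq q [::]; first by exists [::], (a :: v).
rewrite /subst_word /= -/(sw v) => svE.
case: (ltnP (size q) (size (s a))) => q_sa.
  move/(congr1 (nth l1 ^~ (size q))): svE; rewrite nth_cat q_sa nth_cat_size_head /= => /eqP.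
  by rewrite (negbTE (marked_nth (s_marked a) _)) // q_sa lt0n size_eq0 q_nil.
move: svE; rewrite -(cat_take_drop (size (s a)) q) -catA.
case/cat_inj_size; first by rewrite size_takel.
move=> <- /IHv [v1 [v2 [-> <-]]].
by exists (a :: v1), v2.
Qed.

Lemma subst_word_cancel w v z : head l1 z = l1 -> sw v = sw w ++ z ->
  exists2 v', v = w ++ v' & sw v' = z.
Proof.
move=> hz; elim: w v => [|a w IHw] v; first by exists v.
case: v => [|b v]; first by rewrite /subst_word /=; case: (s_marked a) => A' ->.
rewrite /subst_word /= -!/(sw _) -catA => eq_ba.
have hwz : head l1 (sw w ++ z) = l1 by move: (sw_head w); case: (sw w).
have /s_inj ba := marked_cat_inj (s_marked b) (s_marked a) (sw_head v) hwz eq_ba.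
subst b; have [_ /IHw [v' -> <-]] := cat_inj_size erefl eq_ba.
by exists v'.
Qed.

Lemma image_factor_edge pre w t : pre != [::] -> lang Y (pre ++ sw w ++ l1 :: t) ->
  exists a b v1 v3 p r,
    [/\ ext_rel X w a b, sw v1 ++ s a = p ++ pre & s b ++ sw v3 = l1 :: t ++ r].
Proof.
move=> pre_nil /(image_lang_factor marked_nonerasing) [v Xv [p [r svE]]].
have [z zE] : exists z, sw w ++ l1 :: t ++ r = l1 :: z.
  move: (sw_head w); case: (sw w) => [|x L] /= => [_ | ->]; first by exists (t ++ r).
  by exists (L ++ l1 :: t ++ r).
have /subst_word_split [v1 [v2 [vE sv1E]]] : sw v = (p ++ pre) ++ l1 :: z.
  by rewrite svE -zE -!catA.
have : (p ++ pre) ++ sw v2 = (p ++ pre) ++ (sw w ++ l1 :: t ++ r).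
  by rewrite -{1}sv1E -subst_word_cat -vE svE -!catA.
case/(cat_inj_size erefl) => _ sv2E.
have [v3 v2E sv3E] := subst_word_cancel (erefl : head l1 (l1 :: t ++ r) = l1) sv2E.
case/lastP: v1 vE sv1E => [|v1 a] vE sv1E.
  have : nilp (p ++ pre) by rewrite -sv1E.
  by rewrite cat_nilp /nilp !size_eq0 (negbTE pre_nil) andbF.
case: v3 v2E sv3E => [|b v3] // v2E sv3E.
exists a, b, v1, v3, p, r; split=> //.
  apply: (@lang_infix X v1 _ v3).
  by move: Xv; rewrite vE v2E -cats1 -!catA /= -cats1 -!catA.
by rewrite -sv1E -cats1 subst_word_cat subst_word1.
Qed.

Hypothesis shiftX : forall x, X x <-> X (shift x).

Lemma edge_image_factor a w b pre t p : ext_rel X w a b -> s a = p ++ pre ->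
  prefix (l1 :: t) (rcons (s b) l1) -> lang Y (pre ++ sw w ++ l1 :: t).
Proof.
move=> /lang_extend_right [e Xe] saE /prefixP [q sbE].
have [E' seE _] := s_marked e.
have svE : sw (rcons (a :: rcons w b) e) = p ++ (pre ++ sw w ++ l1 :: t) ++ q ++ E'.
  have -> : rcons (a :: rcons w b) e = [:: a] ++ w ++ [:: b] ++ [:: e].
    by rewrite -!cats1 /= -catA.
  by rewrite !subst_word_cat !subst_word1 saE seE -cat_rcons sbE -!catA.
exact: (lang_image_factor marked_nonerasing shiftX Xe svE).
Qed.

Lemma nth_image_cat b v i : i <= size (s b) -> nth l1 (s b ++ sw v) i = nth l1 (s b) i.
Proof. exact/nth_cat_head_l1/sw_head. Qed.

Lemma ext_rel_image_w1 w a' b' : ext_rel Y (sw w ++ [:: l1]) a' b' <->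
  exists a b, [/\ ext_rel X w a b, a' = last l1 (s a) & b' = nth l1 (s b) 1].
Proof.
rewrite /ext_rel rcons_cat -cat1s; split.
  case/image_factor_edge => // a [b [v1 [v3 [p [r [Xab saE sbE]]]]]].
  exists a, b; split=> //.
    by move/(congr1 (last l1)): saE; rewrite !last_cat /=; case: (s_marked a) => A' ->.
  by move/(congr1 (nth l1 ^~ 1)): sbE; rewrite nth_image_cat ?marked_nonerasing.
case=> a [b [Xab -> ->]].
have [p saE] : exists p, s a = p ++ [:: last l1 (s a)].
  by case: (s_marked a) => A' -> _; exists (belast l1 A'); rewrite cats1 -lastI.
apply: (edge_image_factor Xab saE).
by case: (s_marked b) => [[|x B'] -> _] //=; rewrite eqxx prefix0s.
Qed.

Lemma ext_rel_image_w12 w a' b' : ext_rel Y (sw w ++ [:: l1; l2]) a' b' <->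
  exists a b, [/\ ext_rel X w a b, a' = last l1 (s a),
                  nth l1 (s b) 1 = l2 & b' = nth l1 (s b) 2].
Proof.
rewrite /ext_rel rcons_cat -cat1s; split.
  case/image_factor_edge => // a [b [v1 [v3 [p [r [Xab saE sbE]]]]]].
  have sb1 : nth l1 (s b) 1 = l2.
    by move/(congr1 (nth l1 ^~ 1)): sbE; rewrite nth_image_cat ?marked_nonerasing.
  have size_sb : 2 <= size (s b) by move: sb1; case: (s_marked b) => [[|x B'] -> _].
  exists a, b; split=> //.
    by move/(congr1 (last l1)): saE; rewrite !last_cat /=; case: (s_marked a) => A' ->.
  by move/(congr1 (nth l1 ^~ 2)): sbE; rewrite nth_image_cat.
case=> a [b [Xab -> sb1 ->]].
have [p saE] : exists p, s a = p ++ [:: last l1 (s a)].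
  by case: (s_marked a) => A' -> _; exists (belast l1 A'); rewrite cats1 -lastI.
apply: (edge_image_factor Xab saE).
by move: sb1; case: (s_marked b) => [[|x [|y B']] -> _] //= ->; rewrite !eqxx ?prefix0s.
Qed.

Lemma ext_rel_image_2w1 w a' b' : ext_rel Y (l2 :: sw w ++ [:: l1]) a' b' <->
  exists a b, [/\ ext_rel X w a b, last l1 (s a) = l2,
                  a' = penultimate (s a) & b' = nth l1 (s b) 1].
Proof.
have size_sa a : last l1 (s a) = l2 -> 1 < size (s a).
  by case: (s_marked a) => [[|x A']] ->.
have -> : ext_rel Y (l2 :: sw w ++ [:: l1]) a' b' = lang Y ([:: a'; l2] ++ sw w ++ l1 :: [:: b']).
  by rewrite /ext_rel /= rcons_cat.
split.
  case/image_factor_edge => // a [b [v1 [v3 [p [r [Xab saE sbE]]]]]].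
  have sa2 : last l1 (s a) = l2.
    by move/(congr1 (last l1)): saE; rewrite !last_cat /=; case: (s_marked a) => A' ->.
  have [q saE'] := penultimate_last (size_sa a sa2).
  move/(congr1 rev): saE; rewrite saE' catA !rev_cat /rev /= => -[_ <- _].
  exists a, b; split=> //.
  by move/(congr1 (nth l1 ^~ 1)): sbE; rewrite nth_image_cat ?marked_nonerasing.
case=> a [b [Xab sa2 -> ->]].
have [p saE] := penultimate_last (size_sa a sa2); rewrite sa2 in saE.
apply: (edge_image_factor Xab saE).
by case: (s_marked b) => [[|x B'] -> _] //=; rewrite eqxx prefix0s.
Qed.

Section LastLetterRecovers.
Hypothesis last_sa : forall a, last l1 (s a) = a.

Lemma ext_rel_image_w1_last w a b' : ext_rel Y (sw w ++ [:: l1]) a b' <->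
  exists2 b, ext_rel X w a b /\ True & nth l1 (s b) 1 = b'.
Proof.
rewrite ext_rel_image_w1; split=> [[a0 [b [R0]]] | [b [Rab _] <-]].
  by rewrite last_sa => -> ->; exists b.
by exists a, b; rewrite last_sa.
Qed.

Lemma Cminus_empty_from_image_last : injective (fun b => nth l1 (s b) 1) ->
  Cminus_empty Y -> Cminus_empty X.
Proof.
move=> nth1_inj YC w c Xw /CminusP [/lang_extend_right [bc Rc]].
move=> [a1 [a2 [a1c a2c a12 [[b1 R1] [b2 R2]] disj]]].
apply: (not_Cminus_empty (w := sw w ++ [:: l1]) (c := c) _ _ YC).
  by exists (nth l1 (s bc) 1); apply/ext_rel_image_w1_last; exists bc.
apply: (left_cut_image (ext_rel_image_w1_last w) a1c a2c a12); [by exists b1 | by exists b2 |].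
by move=> x1 x2 R1x R2x _ _; apply/eqP => /nth1_inj x12; subst x2; apply: disj R1x R2x.
Qed.

Lemma Cminus_empty_from_image_third : dendric_shift X ->
  (forall b, (nth l1 (s b) 1 == l2) = (b != l1)) ->
  {in [pred b | b != l1] &, injective (fun b => nth l1 (s b) 2)} ->
  Cminus_empty Y -> Cminus_empty X.
Proof.
move=> dendX nth1_sb nth2_inj YC w c Xw /CminusP [/lang_extend_right Rc cut].
have conn a1 a2 : (exists b, ext_rel X w a1 b) -> (exists b, ext_rel X w a2 b) ->
    reach (side_edge (ext_rel X w)) (inl a1) (inl a2).
  move=> [b1 /ext_rel_lang_left X1] [b2 /ext_rel_lang_left X2].
  exact: (dendric_reach (u := inl a1) (v := inl a2) (dendX w Xw)).
have SE a b' : ext_rel Y (sw w ++ [:: l1; l2]) a b' <->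
    exists2 b, ext_rel X w a b /\ b != l1 & nth l1 (s b) 2 = b'.
  rewrite ext_rel_image_w12; split=> [[a0 [b [R0]]] | [b [Rab bl1] <-]].
    by rewrite last_sa => -> /eqP; rewrite nth1_sb => bl1 ->; exists b.
  by exists a, b; rewrite last_sa; split=> //; apply/eqP; rewrite nth1_sb.
have nth1_l1 b : nth l1 (s b) 1 = nth l1 (s l1) 1 -> b = l1.
  move=> eq_nth1; apply/eqP; rewrite -[b == l1]negbK -nth1_sb eq_nth1 nth1_sb.
  by rewrite eqxx.
have [] := left_cut_image_split conn SE (ext_rel_image_w1_last w) nth2_inj nth1_l1 Rc cut;
  by case=> nb ycut; apply: not_Cminus_empty nb ycut YC.
Qed.

End LastLetterRecovers.

Section SecondLetterRecovers.
Hypothesis nth1_sb : forall b, nth l1 (s b) 1 = b.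

Lemma ext_rel_image_w1_second w b a' : flip (ext_rel Y (sw w ++ [:: l1])) b a' <->
  exists2 a, flip (ext_rel X w) b a /\ True & last l1 (s a) = a'.
Proof.
rewrite /flip ext_rel_image_w1; split=> [[a [b0 [R0 ->]]] | [a [Rab _] <-]].
  by rewrite nth1_sb => ->; exists a.
by exists a, b; rewrite nth1_sb.
Qed.

Lemma Cplus_empty_from_image_second : injective (fun a => last l1 (s a)) ->
  Cplus_empty Y -> Cplus_empty X.
Proof.
move=> last_inj YC w c Xw /CplusP [/lang_extend_left [ac Rc]].
move=> [b1 [b2 [b1c b2c b12 [[a1 R1] [a2 R2]] disj]]].
apply: (not_Cplus_empty (w := sw w ++ [:: l1]) (c := c) _ _ YC).
  by exists (last l1 (s ac)); apply/ext_rel_image_w1_second; exists ac.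
apply: (left_cut_image (ext_rel_image_w1_second w) b1c b2c b12); [by exists a1 | by exists a2 |].
by move=> x1 x2 R1x R2x _ _; apply/eqP => /last_inj x12; subst x2; apply: disj R1x R2x.
Qed.

Lemma Cplus_empty_from_image_penultimate : dendric_shift X ->
  (forall a, (last l1 (s a) == l2) = (a != l1)) ->
  {in [pred a | a != l1] &, injective (fun a => penultimate (s a))} ->
  Cplus_empty Y -> Cplus_empty X.
Proof.
move=> dendX last_sa pen_inj YC w c Xw /CplusP [/lang_extend_left Rc cut].
have conn b1 b2 : (exists a, flip (ext_rel X w) b1 a) ->
    (exists a, flip (ext_rel X w) b2 a) ->
    reach (side_edge (flip (ext_rel X w))) (inl b1) (inl b2).
  move=> [a1 /ext_rel_lang_right X1] [a2 /ext_rel_lang_right X2].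
  exact: (reach_swap (dendric_reach (u := inr b1) (v := inr b2) (dendX w Xw) X1 X2)).
have SE b a' : flip (ext_rel Y (l2 :: sw w ++ [:: l1])) b a' <->
    exists2 a, flip (ext_rel X w) b a /\ a != l1 & penultimate (s a) = a'.
  rewrite /flip ext_rel_image_2w1; split=> [[a [b0 [R0 /eqP]]] | [a [Rab al1] <-]].
    by rewrite last_sa nth1_sb => al1 -> ->; exists a.
  by exists a, b; rewrite nth1_sb; split=> //; apply/eqP; rewrite last_sa.
have last_l1 a : last l1 (s a) = last l1 (s l1) -> a = l1.
  move=> eq_last; apply/eqP; rewrite -[a == l1]negbK -last_sa eq_last last_sa.
  by rewrite eqxx.
have [] := left_cut_image_split conn SE (ext_rel_image_w1_second w) pen_inj last_l1 Rc cut;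
  by case=> na ycut; apply: not_Cplus_empty na ycut YC.
Qed.

End SecondLetterRecovers.

End MarkedMorphism.

(** * Two-letter factors of images *)

Section TwoLetterFactors.
Variables (s : morph) (X : subshift).
Hypothesis s_head : forall a, exists A', s a = l1 :: A'.
Notation Y := (image_shift s X).

Let s_nonerasing a : 0 < size (s a).
Proof. by case: (s_head a) => A' ->. Qed.

Lemma subst_word_pair v p c d r : subst_word s v = p ++ [:: c; d] ++ r ->
  exists a i, [/\ i < size (s a), nth l1 (s a) i = c & nth l1 (s a) i.+1 = d].
Proof.
elim: v p => [|a v IHv] p; first by case: p.
rewrite /subst_word /= -/(subst_word s v) => svE.
case: (ltnP (size p) (size (s a))) => [p_sa | sa_p].
  exists a, (size p); split=> //.
    by move/(congr1 (nth l1 ^~ (size p))): svE; rewrite nth_cat p_sa nth_cat_size_head.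
  move/(congr1 (nth l1 ^~ (size p).+1)): svE.
  by rewrite nth_cat_head_l1 ?head_subst_word // nth_cat ltnNge leqnSn subSnn.
move: svE; rewrite -(cat_take_drop (size (s a)) p) -catA.
by case/cat_inj_size; [rewrite size_takel | move=> _ /IHv].
Qed.

Lemma lang_image_pair c d : lang Y [:: c; d] ->
  exists a i, [/\ i < size (s a), nth l1 (s a) i = c & nth l1 (s a) i.+1 = d].
Proof. by case/(image_lang_factor s_nonerasing) => v _ [p [r /subst_word_pair]]. Qed.

Lemma image_pair_lang a i : shift_space X -> i < size (s a) ->
  lang Y [:: nth l1 (s a) i; nth l1 (s a) i.+1].
Proof.
move=> shX i_sa; have [_ shiftX _] := shX.
have [e Xae] := lang_extend_right (lang_letter a shX).
have [E seE] := s_head e.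
have head_se : head l1 (s e) = l1 by rewrite seE.
have size_ase : i.+1 < size (s a ++ s e) by rewrite size_cat seE /= addnS ltnS ltn_addr.
have svE : subst_word s [:: a; e] =
    take i (s a) ++ [:: nth l1 (s a) i; nth l1 (s a) i.+1] ++ drop i.+2 (s a ++ s e).
  rewrite /subst_word /= cats0 -(nth_cat_head_l1 head_se (ltnW i_sa)).
  rewrite -(nth_cat_head_l1 head_se i_sa) -[LHS](cat_take_drop i) takel_cat; last exact: ltnW.
  by rewrite (drop_nth l1 (ltnW size_ase)) (drop_nth l1 size_ase).
exact: (lang_image_factor s_nonerasing shiftX Xae svE).
Qed.

End TwoLetterFactors.

(** * The morphisms of S_3 *)

Lemma not_Cminus_empty_nil Y c a1 a2 : a1 != c -> a2 != c -> a1 != a2 ->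
  (exists d, lang Y [:: c; d]) -> (exists b, lang Y [:: a1; b]) ->
  (exists b, lang Y [:: a2; b]) ->
  (forall b, lang Y [:: a1; b] -> lang Y [:: a2; b] -> False) -> ~ Cminus_empty Y.
Proof.
move=> a1c a2c a12 Yc Y1 Y2 disj; apply: (not_Cminus_empty (w := [::]) Yc).
by exists a1, a2.
Qed.

Lemma not_Cplus_empty_nil Y c b1 b2 : b1 != c -> b2 != c -> b1 != b2 ->
  (exists d, lang Y [:: d; c]) -> (exists a, lang Y [:: a; b1]) ->
  (exists a, lang Y [:: a; b2]) ->
  (forall a, lang Y [:: a; b1] -> lang Y [:: a; b2] -> False) -> ~ Cplus_empty Y.
Proof.
move=> b1c b2c b12 Yc Y1 Y2 disj; apply: (not_Cplus_empty (w := [::]) Yc).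
by exists b1, b2.
Qed.

Section NonInvariantMorphisms.
Variable X : subshift.
Hypothesis shX : shift_space X.

Lemma pairs_beta c d : lang (image_shift s_beta X) [:: c; d] ->
  (c, d) \in [:: (l1, l2); (l1, l3); (l3, l2); (l1, l1); (l2, l1)].
Proof.
case/lang_image_pair => [|a [i [lt_i <- <-]]]; first by apply: letter_ind; eexists.
by move: a i lt_i; apply: letter_ind => -[|[|[|i]]].
Qed.

Lemma pairs_gamma c d : lang (image_shift s_gamma X) [:: c; d] ->
  (c, d) \in [:: (l1, l2); (l2, l3); (l1, l1); (l2, l1); (l3, l1)].
Proof.
case/lang_image_pair => [|a [i [lt_i <- <-]]]; first by apply: letter_ind; eexists.
by move: a i lt_i; apply: letter_ind => -[|[|[|i]]].
Qed.

Lemma pairs_eta c d : lang (image_shift s_eta X) [:: c; d] ->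
  (c, d) \in [:: (l1, l3); (l1, l2); (l2, l3); (l3, l1); (l2, l1)].
Proof.
case/lang_image_pair => [|a [i [lt_i <- <-]]]; first by apply: letter_ind; eexists.
by move: a i lt_i; apply: letter_ind => -[|[|[|i]]].
Qed.

Lemma beta_not_Cminus_empty : ~ Cminus_empty (image_shift s_beta X).
Proof.
have s_head a : exists A', s_beta a = l1 :: A' by move: a; apply: letter_ind; eexists.
apply: (@not_Cminus_empty_nil _ l1 l2 l3) => //.
- by eexists; apply: (image_pair_lang (a := l2) (i := 0) s_head shX).
- by eexists; apply: (image_pair_lang (a := l2) (i := 1) s_head shX).
- by eexists; apply: (image_pair_lang (a := l3) (i := 1) s_head shX).
by move=> b /pairs_beta + /pairs_beta; move: b; apply: letter_ind.
Qed.

Lemma gamma_not_Cplus_empty : ~ Cplus_empty (image_shift s_gamma X).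
Proof.
have s_head a : exists A', s_gamma a = l1 :: A' by move: a; apply: letter_ind; eexists.
apply: (@not_Cplus_empty_nil _ l1 l2 l3) => //.
- by eexists; apply: (image_pair_lang (a := l2) (i := 1) s_head shX).
- by eexists; apply: (image_pair_lang (a := l2) (i := 0) s_head shX).
- by eexists; apply: (image_pair_lang (a := l3) (i := 1) s_head shX).
by move=> a /pairs_gamma + /pairs_gamma; move: a; apply: letter_ind.
Qed.

Lemma eta_not_Cminus_empty : ~ Cminus_empty (image_shift s_eta X).
Proof.
have s_head a : exists A', s_eta a = l1 :: A' by move: a; apply: letter_ind; eexists.
apply: (@not_Cminus_empty_nil _ l2 l1 l3) => //.
- by eexists; apply: (image_pair_lang (a := l2) (i := 1) s_head shX).
- by eexists; apply: (image_pair_lang (a := l1) (i := 0) s_head shX).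
- by eexists; apply: (image_pair_lang (a := l1) (i := 1) s_head shX).
by move=> b /pairs_eta + /pairs_eta; move: b; apply: letter_ind.
Qed.

Lemma eta_not_Cplus_empty : ~ Cplus_empty (image_shift s_eta X).
Proof.
have s_head a : exists A', s_eta a = l1 :: A' by move: a; apply: letter_ind; eexists.
apply: (@not_Cplus_empty_nil _ l3 l1 l2) => //.
- by eexists; apply: (image_pair_lang (a := l1) (i := 0) s_head shX).
- by eexists; apply: (image_pair_lang (a := l1) (i := 1) s_head shX).
- by eexists; apply: (image_pair_lang (a := l2) (i := 0) s_head shX).
by move=> a /pairs_eta + /pairs_eta; move: a; apply: letter_ind.
Qed.

Variable k : nat.
Hypothesis k_gt0 : 0 < k.

Lemma pairs_delta c d : lang (image_shift (s_delta k) X) [:: c; d] ->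
  (c, d) \in [:: (l1, l2); (l2, l3); (l3, l3); (l1, l1); (l3, l1)].
Proof.
case/lang_image_pair => [|a [i [lt_i <- <-]]]; first by apply: letter_ind; eexists.
move: a i lt_i; apply: letter_ind => -[|[|i]] //=; rewrite ?size_nseq => lt_i.
- by rewrite nth_nseq k_gt0.
- by rewrite !nth_nseq (lt_i : i < k); case: ifP.
by rewrite -[l3 :: nseq k l3]/(nseq k.+1 l3) !nth_nseq (lt_i : i < k.+1); case: ifP.
Qed.

Lemma pairs_zeta c d : lang (image_shift (s_zeta k) X) [:: c; d] ->
  (c, d) \in [:: (l1, l3); (l3, l3); (l1, l2); (l3, l1); (l2, l1)].
Proof.
case/lang_image_pair => [|a [i [lt_i <- <-]]]; first by apply: letter_ind; eexists.
move: a i lt_i; apply: letter_ind => -[|i] //=; rewrite ?size_nseq => lt_i.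
- by rewrite nth_nseq k_gt0.
- by rewrite !nth_nseq (lt_i : i < k); case: ifP.
- by case: i lt_i.
by rewrite -[l3 :: nseq k l3]/(nseq k.+1 l3) !nth_nseq (lt_i : i < k.+1); case: ifP.
Qed.

Lemma delta_not_Cminus_empty : ~ Cminus_empty (image_shift (s_delta k) X).
Proof.
have s_head a : exists A', s_delta k a = l1 :: A' by move: a; apply: letter_ind; eexists.
case: k k_gt0 s_head pairs_delta => // k' _ s_head pairs.
apply: (@not_Cminus_empty_nil _ l3 l1 l2) => //.
- by eexists; apply: (image_pair_lang (a := l3) (i := 2) s_head shX).
- by eexists; apply: (image_pair_lang (a := l2) (i := 0) s_head shX).
- by eexists; apply: (image_pair_lang (a := l2) (i := 1) s_head shX).
by move=> b /pairs + /pairs; move: b; apply: letter_ind.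
Qed.

Lemma delta_not_Cplus_empty : ~ Cplus_empty (image_shift (s_delta k) X).
Proof.
have s_head a : exists A', s_delta k a = l1 :: A' by move: a; apply: letter_ind; eexists.
case: k k_gt0 s_head pairs_delta => // k' _ s_head pairs.
apply: (@not_Cplus_empty_nil _ l1 l2 l3) => //.
- by eexists; apply: (image_pair_lang (a := l1) (i := 0) s_head shX).
- by eexists; apply: (image_pair_lang (a := l2) (i := 0) s_head shX).
- by eexists; apply: (image_pair_lang (a := l3) (i := 1) s_head shX).
by move=> a /pairs + /pairs; move: a; apply: letter_ind.
Qed.

Lemma zeta_not_Cminus_empty : ~ Cminus_empty (image_shift (s_zeta k) X).
Proof.
have s_head a : exists A', s_zeta k a = l1 :: A' by move: a; apply: letter_ind; eexists.
case: k k_gt0 s_head pairs_zeta => // k' _ s_head pairs.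
apply: (@not_Cminus_empty_nil _ l3 l1 l2) => //.
- by eexists; apply: (image_pair_lang (a := l3) (i := 1) s_head shX).
- by eexists; apply: (image_pair_lang (a := l2) (i := 0) s_head shX).
- by eexists; apply: (image_pair_lang (a := l2) (i := 1) s_head shX).
by move=> b /pairs + /pairs; move: b; apply: letter_ind.
Qed.

Lemma zeta_not_Cplus_empty : ~ Cplus_empty (image_shift (s_zeta k) X).
Proof.
have s_head a : exists A', s_zeta k a = l1 :: A' by move: a; apply: letter_ind; eexists.
case: k k_gt0 s_head pairs_zeta => // k' _ s_head pairs.
apply: (@not_Cplus_empty_nil _ l3 l1 l2) => //.
- by eexists; apply: (image_pair_lang (a := l3) (i := 0) s_head shX).
- by eexists; apply: (image_pair_lang (a := l2) (i := 1) s_head shX).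
- by eexists; apply: (image_pair_lang (a := l2) (i := 0) s_head shX).
by move=> a /pairs + /pairs; move: a; apply: letter_ind.
Qed.

End NonInvariantMorphisms.

Lemma invariant_of_const (F : seq letter -> seq letter -> seq letter) (s : morph) L :
  (forall a1 a2, a1 != a2 -> F (s a1) (s a2) = L) ->
  forall a1 a2 b1 b2, a1 != a2 -> b1 != b2 -> F (s a1) (s a2) = F (s b1) (s b2).
Proof. by move=> FL a1 a2 b1 b2 a12 b12; rewrite !FL. Qed.

Lemma left_invariant_alpha : left_invariant s_alpha.
Proof. by apply: (invariant_of_const (L := [::])); do 2! apply: letter_ind. Qed.

Lemma left_invariant_gamma : left_invariant s_gamma.
Proof. by apply: (invariant_of_const (L := [::])); do 2! apply: letter_ind. Qed.

Lemma right_invariant_alpha : right_invariant s_alpha.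
Proof. by apply: (invariant_of_const (L := [:: l1])); do 2! apply: letter_ind. Qed.

Lemma right_invariant_beta : right_invariant s_beta.
Proof. by apply: (invariant_of_const (L := [:: l1])); do 2! apply: letter_ind. Qed.

Section InvariantMorphisms.
Variable X : subshift.
Hypothesis shiftX : forall x, X x <-> X (shift x).

Lemma marked_alpha a : marked (s_alpha a).
Proof. by move: a; apply: letter_ind; eexists. Qed.

Lemma marked_beta a : marked (s_beta a).
Proof. by move: a; apply: letter_ind; eexists. Qed.

Lemma marked_gamma a : marked (s_gamma a).
Proof. by move: a; apply: letter_ind; eexists. Qed.

Lemma s_alpha_inj : injective s_alpha.
Proof. by do 2! apply: letter_ind. Qed.

Lemma s_beta_inj : injective s_beta.
Proof. by do 2! apply: letter_ind. Qed.

Lemma s_gamma_inj : injective s_gamma.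
Proof. by do 2! apply: letter_ind. Qed.

Lemma alpha_Cminus_empty : Cminus_empty (image_shift s_alpha X) -> Cminus_empty X.
Proof.
apply: (Cminus_empty_from_image_last marked_alpha s_alpha_inj shiftX).
  by apply: letter_ind.
by do 2! apply: letter_ind.
Qed.

Lemma alpha_Cplus_empty : Cplus_empty (image_shift s_alpha X) -> Cplus_empty X.
Proof.
apply: (Cplus_empty_from_image_second marked_alpha s_alpha_inj shiftX).
  by apply: letter_ind.
by do 2! apply: letter_ind.
Qed.

Hypothesis dendX : dendric_shift X.

Lemma beta_Cplus_empty : Cplus_empty (image_shift s_beta X) -> Cplus_empty X.
Proof.
apply: (Cplus_empty_from_image_penultimate marked_beta s_beta_inj shiftX _ dendX).
- by apply: letter_ind.
- by apply: letter_ind.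
by do 2! apply: letter_ind.
Qed.

Lemma gamma_Cminus_empty : Cminus_empty (image_shift s_gamma X) -> Cminus_empty X.
Proof.
apply: (Cminus_empty_from_image_third marked_gamma s_gamma_inj shiftX _ dendX).
- by apply: letter_ind.
- by apply: letter_ind.
by do 2! apply: letter_ind.
Qed.

End InvariantMorphisms.

Theorem corollary5p9 (X : subshift) (s : morph) :
  shift_space X -> dendric_shift X -> DP X s ->
  (Cminus_empty (image_shift s X) -> Cminus_empty X /\ left_invariant s) /\
  (Cplus_empty (image_shift s X) -> Cplus_empty X /\ right_invariant s).
Proof.
move=> shX dendX [s_S3 _]; have [_ shiftX _] := shX.
case: s_S3 => [|[|[|[|[[k [k_gt0]]|[k [k_gt0]]]]]]] /functional_extensionality ->.
- split=> YC; split; [exact: alpha_Cminus_empty | exact: left_invariant_alpha |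
                      exact: alpha_Cplus_empty | exact: right_invariant_alpha].
- split=> YC; first by case: (beta_not_Cminus_empty shX).
  by split; [exact: beta_Cplus_empty | exact: right_invariant_beta].
- split=> YC; last by case: (gamma_not_Cplus_empty shX).
  by split; [exact: gamma_Cminus_empty | exact: left_invariant_gamma].
- by split=> YC; [case: (eta_not_Cminus_empty shX) | case: (eta_not_Cplus_empty shX)].
- by split=> YC;
    [case: (delta_not_Cminus_empty shX k_gt0) | case: (delta_not_Cplus_empty shX k_gt0)].
by split=> YC;
  [case: (zeta_not_Cminus_empty shX k_gt0) | case: (zeta_not_Cplus_empty shX k_gt0)].
Qed.
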